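(* Let $n\geqslant1$, $a,b>0$, $\sigma\in(0,1)\cup(1,+\infty)$, and let $\widehat v(t,\xi)=\frac{\lambda_+e^{\lambda_-t}-\lambda_-e^{\lambda_+t}}{\lambda_+-\lambda_-}\widehat v_0+\frac{e^{\lambda_+t}-e^{\lambda_-t}}{\lambda_+-\lambda_-}\widehat v_1$ with $\lambda_\pm=\frac12\big(-1\pm\sqrt{1-4(a|\xi|^2+b|\xi|^{2\sigma})}\big)$ (the Fourier transform of the solution of $v_{tt}-a\Delta v+b(-\Delta)^\sigma v+v_t=0$, $v(0)=v_0$, $v_t(0)=v_1$). There exist $N_0>0$ sufficiently large and constants $c,C>0$ such that for all $t\geqslant0$ and all $|\xi|\geqslant N_0$: if $\sigma\in(0,1)$ then $|\widehat v|\leqslant Ce^{-ct}(|\widehat v_0|+|\xi|^{-1}|\widehat v_1|)$; if $\sigma\in(1,+\infty)$ then $|\widehat v|\leqslant Ce^{-ct}(|\widehat v_0|+|\xi|^{-\sigma}|\widehat v_1|)$.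
   Context: $(-\Delta)^\sigma$ is the Fourier multiplier with symbol $|\xi|^{2\sigma}$. *)

From HB Require Import structures.
From mathcomp Require Import all_boot all_order all_algebra.
From mathcomp Require Import all_classical all_reals all_analysis.
From mathcomp Require Export complex.
Set Implicit Arguments. Unset Strict Implicit. Unset Printing Implicit Defensive.
Import Order.TTheory GRing.Theory Num.Theory ComplexField.
Local Open Scope ring_scope.
Local Open Scope complex_scope.

Definition eucl_norm (R : realType) (n : nat) (xi : 'rV[R]_n) : R :=
  Num.sqrt (\sum_(i < n) xi ord0 i ^+ 2).

Definition cexp (R : realType) (z : R[i]) : R[i] :=
  (expR (complex.Re z))%:C * (cos (complex.Im z) +i* sin (complex.Im z)).

Definition cmod (R : realType) (z : R[i]) : R := Normc.normc z.

(* Symbol of  -a Delta + b (-Delta)^sigma :  a|xi|^2 + b|xi|^(2 sigma). *)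
Definition symb (R : realType) (n : nat) (a b sigma : R) (xi : 'rV[R]_n) : R :=
  a * eucl_norm xi ^+ 2 + b * (eucl_norm xi `^ (2 * sigma)).

Definition lam_plus (R : realType) (n : nat) (a b sigma : R) (xi : 'rV[R]_n) : R[i] :=
  (- 1 + sqrtC ((1 - 4 * symb a b sigma xi)%:C)) / 2.
Definition lam_minus (R : realType) (n : nat) (a b sigma : R) (xi : 'rV[R]_n) : R[i] :=
  (- 1 - sqrtC ((1 - 4 * symb a b sigma xi)%:C)) / 2.

(* hat v (t, xi) given hat v0 (xi) = v0 and hat v1 (xi) = v1. *)
Definition vhat (R : realType) (n : nat) (a b sigma : R) (xi : 'rV[R]_n)
    (v0 v1 : R[i]) (t : R) : R[i] :=
  let lp := lam_plus a b sigma xi in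
  let lm := lam_minus a b sigma xi in
  (lp * cexp (lm * t%:C) - lm * cexp (lp * t%:C)) / (lp - lm) * v0
  + (cexp (lp * t%:C) - cexp (lm * t%:C)) / (lp - lm) * v1.

From HB Require Import structures.
From mathcomp Require Import all_boot all_order all_algebra.
From mathcomp Require Import all_classical all_reals all_analysis.
From mathcomp Require Import complex.
From mathcomp Require Import ring lra.
Import Order.TTheory GRing.Theory Num.Theory ComplexField.
Local Open Scope ring_scope.

(* For |xi| >= N0 the discriminant 1 - 4 (a|xi|^2 + b|xi|^(2 sigma)) is negative, so
   lambda_(+/-) = -1/2 +/- i m/2 with m^2 = 4 (a|xi|^2 + b|xi|^(2 sigma)) - 1, and
     vhat = e^(-t/2) [(cos (m t/2) + sin (m t/2) / m) v0 + (2 sin (m t/2) / m) v1].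
   Hence |vhat| <= 2 e^(-t/2) (|v0| + |v1| / |m|), and |m| is bounded below both by a
   multiple of |xi| and by a multiple of |xi|^sigma. *)

Lemma invr_norm_le {R : realFieldType} {m rho kappa K : R} :
  0 <= rho -> 1 <= K -> 1 <= K * kappa -> kappa <= (rho * m) ^+ 2 ->
  `|m|^-1 <= K * rho.
Proof.
move=> rho_ge0 K_ge1 Kkappa_ge1 kappa_le; set y := rho * `|m|.
have y_ge0 : 0 <= y by rewrite mulr_ge0.
have kappa_le_y2 : kappa <= y ^+ 2.
  by rewrite /y exprMn real_normK ?num_real // -exprMn.
have Ky_ge1 : 1 <= K * y.
  have [y_ge1 | y_lt1] := lerP 1 y; first by nra.
  have : y ^+ 2 <= y by rewrite expr2 ler_piMl // ltW.
  nra.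
have m_gt0 : 0 < `|m|.
  rewrite lt0r normr_ge0 andbT; apply: contraTneq Ky_ge1.
  by rewrite /y => ->; rewrite !mulr0 ler10.
by rewrite -(ler_pM2r m_gt0) mulVf ?gt_eqF // -mulrA -/y.
Qed.

Section Oscillatory.
Local Open Scope complex_scope.
Context {R : realType}.

Lemma cexp_complex (x y : R) :
  cexp (x +i* y) = (expR x * cos y) +i* (expR x * sin y).
Proof. by apply/eqP; rewrite eq_complex /=; apply/andP; split; apply/eqP; ring. Qed.

Lemma cmod_real (x : R) : cmod x%:C = `|x|.
Proof. by rewrite /cmod /= expr0n addr0 sqrtr_sqr. Qed.

Lemma cmod_ge0 (z : R[i]) : 0 <= cmod z.
Proof. by case: z => x y; rewrite /cmod sqrtr_ge0. Qed.

Lemma cmodM (z w : R[i]) : cmod (z * w) = cmod z * cmod w.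
Proof. exact: Normc.normcM. Qed.

Lemma cmodD_le (z w : R[i]) : cmod (z + w) <= cmod z + cmod w.
Proof. exact: le_normcD. Qed.

Lemma sqrtC_neg (x : R) : x < 0 ->
  exists m : R, sqrtC x%:C = 0 +i* m /\ m ^+ 2 = - x.
Proof.
move=> x_lt0; have := sqrtCK x%:C; case: (sqrtC x%:C) => p q.
rewrite expr2 => /eqP; rewrite eq_complex /= => /andP [/eqP Re_eq /eqP Im_eq].
have p0 : p = 0.
  have /eqP : p * q = 0 by lra.
  rewrite mulf_eq0 => /orP [/eqP // | /eqP q0].
  by move: Re_eq; rewrite q0 mulr0 subr0 => Re_eq; have := sqr_ge0 p; rewrite expr2; lra.
by exists q; rewrite p0 expr2; split => //; move: Re_eq; rewrite p0 mul0r; lra.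
Qed.

Lemma complex_half (x y : R) : (x +i* y) / 2 = (x / 2) +i* (y / 2).
Proof.
have -> : (2 : R[i]) = (2 : R)%:C by rewrite rmorph_nat.
by rewrite -fmorphV; apply/eqP; rewrite eq_complex /=; apply/andP; split; apply/eqP; ring.
Qed.

Lemma vhat_oscillatory {n} {a b sigma : R} {xi : 'rV[R]_n}
    (v0 v1 : R[i]) (t : R) {m : R} :
  sqrtC ((1 - 4 * symb a b sigma xi)%:C) = 0 +i* m -> m != 0 ->
  vhat a b sigma xi v0 v1 t =
    (expR (- (2^-1 * t)) * (cos (m / 2 * t) + sin (m / 2 * t) / m))%:C * v0
    + (2 * expR (- (2^-1 * t)) * sin (m / 2 * t) / m)%:C * v1.
Proof.
move=> sqrt_eq m_neq0; rewrite /vhat /lam_plus /lam_minus sqrt_eq.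
have -> : (- 1 + (0 +i* m)) / 2 = (- 2^-1) +i* (m / 2).
  by rewrite complex_half; apply/eqP; rewrite eq_complex /=;
     apply/andP; split; apply/eqP; lra.
have -> : (- 1 - (0 +i* m)) / 2 = (- 2^-1) +i* (- (m / 2)).
  by rewrite complex_half; apply/eqP; rewrite eq_complex /=;
     apply/andP; split; apply/eqP; lra.
have -> : (- 2^-1) +i* (m / 2) - (- 2^-1) +i* (- (m / 2)) = 0 +i* m.
  by apply/eqP; rewrite eq_complex /=; apply/andP; split; apply/eqP; lra.
have mulC_real (x y s : R) : (x +i* y) * s%:C = (x * s) +i* (y * s).
  by apply/eqP; rewrite eq_complex /=; apply/andP; split; apply/eqP; ring.
have im_neq0 : 0 +i* m != 0 by rewrite eq_complex /= negb_and m_neq0 orbT.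
rewrite !mulC_real !cexp_complex !mulNr cosN sinN.
congr (_ * v0 + _ * v1); apply: (canLR (mulfK im_neq0));
  apply/eqP; rewrite eq_complex /=; apply/andP; split; apply/eqP; field.
all: exact: m_neq0.
Qed.

Lemma cmod_vhat_oscillatory_le {n} {a b sigma : R} {xi : 'rV[R]_n}
    (v0 v1 : R[i]) (t : R) {m : R} :
  sqrtC ((1 - 4 * symb a b sigma xi)%:C) = 0 +i* m -> 1 <= m ^+ 2 ->
  cmod (vhat a b sigma xi v0 v1 t)
    <= 2 * expR (- (2^-1 * t)) * (cmod v0 + `|m|^-1 * cmod v1).
Proof.
move=> sqrt_eq m2_ge1.
have m_ge1 : 1 <= `|m|.
  have : 1 <= `|m| ^+ 2 by rewrite real_normK ?num_real.
  have := normr_ge0 m; nra.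
have m_gt0 : 0 < `|m| by lra.
have m_neq0 : m != 0 by rewrite -normr_gt0.
have minv_le1 : `|m|^-1 <= 1 by rewrite invf_le1.
rewrite (vhat_oscillatory v0 v1 t sqrt_eq m_neq0).
set E := expR _; set c := cos _; set s := sin _.
have E_gt0 : 0 < E by rewrite expR_gt0.
have c_le1 : `|c| <= 1 by rewrite ler_norml cos_geN1 cos_le1.
have s_le1 : `|s| <= 1 by rewrite ler_norml sin_geN1 sin_le1.
have coef0_le : `|E * (c + s / m)| <= 2 * E.
  rewrite normrM gtr0_norm // mulrC ler_pM2r //.
  apply: le_trans (ler_normD _ _) _; rewrite normrM normfV.
  have := normr_ge0 s; nra.
have coef1_le : `|2 * E * s / m| <= 2 * E * `|m|^-1.
  rewrite normrM normfV !normrM (gtr0_norm E_gt0) ger0_norm // ler_pM2r ?invr_gt0 //.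
  by rewrite -[leRHS]mulr1 ler_pM2l ?mulr_gt0.
apply: le_trans (cmodD_le _ _) _.
rewrite !cmodM !cmod_real [leRHS]mulrDr [in leRHS]mulrA.
exact: lerD (ler_wpM2r (cmod_ge0 v0) coef0_le) (ler_wpM2r (cmod_ge0 v1) coef1_le).
Qed.

Lemma cmod_vhat_oscillatory_decay {n} {a b sigma : R} {xi : 'rV[R]_n}
    (v0 v1 : R[i]) (t : R) {m rho kappa K : R} :
  sqrtC ((1 - 4 * symb a b sigma xi)%:C) = 0 +i* m -> 1 <= m ^+ 2 ->
  0 <= rho -> 1 <= K -> 1 <= K * kappa -> kappa <= (rho * m) ^+ 2 ->
  cmod (vhat a b sigma xi v0 v1 t)
    <= 2 * K * expR (- (2^-1 * t)) * (cmod v0 + rho * cmod v1).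
Proof.
move=> sqrt_eq m2_ge1 rho_ge0 K_ge1 Kkappa_ge1 kappa_le.
have minv_le := invr_norm_le rho_ge0 K_ge1 Kkappa_ge1 kappa_le.
apply: le_trans (cmod_vhat_oscillatory_le v0 v1 t sqrt_eq m2_ge1) _.
set E := expR _; set x0 := cmod v0; set x1 := cmod v1.
have -> : 2 * K * E * (x0 + rho * x1) = 2 * E * (K * (x0 + rho * x1)) by ring.
rewrite ler_wpM2l ?mulr_ge0 ?expR_ge0 // mulrDr mulrA.
by rewrite lerD ?ler_wpM2r ?cmod_ge0 // ler_peMl ?cmod_ge0.
Qed.

Lemma symbE n (a b sigma : R) (xi : 'rV[R]_n) :
  symb a b sigma xi = a * eucl_norm xi ^+ 2 + b * (eucl_norm xi `^ sigma) ^+ 2.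
Proof. by rewrite /symb [2 * sigma]mulrC powRrM powR_mulrn ?powR_ge0. Qed.

Lemma sqrt_disc_high_freq n (a b sigma : R) (xi : 'rV[R]_n) :
  0 < a -> 0 < b -> 1 + a^-1 <= eucl_norm xi ->
  exists m : R, [/\ sqrtC ((1 - 4 * symb a b sigma xi)%:C) = 0 +i* m,
    1 <= m ^+ 2, a <= ((eucl_norm xi)^-1 * m) ^+ 2
    & b <= ((eucl_norm xi `^ sigma)^-1 * m) ^+ 2].
Proof.
move=> a_gt0 b_gt0 N0_le; set r := eucl_norm xi in N0_le *.
have ainv_gt0 : 0 < a^-1 by rewrite invr_gt0.
have r_gt0 : 0 < r by lra.
have ar2_ge1 : 1 <= a * r ^+ 2.
  have : a * (1 + a^-1) = a + 1 by rewrite mulrDr mulr1 mulfV ?gt_eqF.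
  rewrite expr2; nra.
set rho := r `^ sigma; have rho_gt0 : 0 < rho by rewrite powR_gt0.
have brho2_ge0 := mulr_ge0 (ltW b_gt0) (sqr_ge0 rho).
have disc_lt0 : 1 - 4 * symb a b sigma xi < 0 by rewrite symbE -/r -/rho; lra.
have [m [sqrt_eq m2_eq]] := sqrtC_neg _ disc_lt0.
have m2_ge : 3 * a * r ^+ 2 + 4 * b * rho ^+ 2 <= m ^+ 2.
  by rewrite m2_eq symbE -/r -/rho; lra.
exists m; split => //; first lra.
  by rewrite exprMn exprVn ler_pdivlMl ?exprn_gt0 //; lra.
by rewrite exprMn exprVn ler_pdivlMl ?exprn_gt0 //; lra.
Qed.

End Oscillatory.

Theorem proposition3p2 (R : realType) (n : nat) (a b sigma : R) :
  (1 <= n)%N -> 0 < a -> 0 < b -> 0 < sigma -> sigma != 1 ->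
  exists N0 c C : R, [/\ 0 < N0, 0 < c, 0 < C &
    forall (t : R) (xi : 'rV[R]_n) (v0 v1 : R[i]),
      0 <= t -> N0 <= eucl_norm xi ->
      (sigma < 1 ->
         cmod (vhat a b sigma xi v0 v1 t)
         <= C * expR (- (c * t)) * (cmod v0 + (eucl_norm xi)^-1 * cmod v1))
      /\
      (1 < sigma ->
         cmod (vhat a b sigma xi v0 v1 t)
         <= C * expR (- (c * t)) * (cmod v0 + eucl_norm xi `^ (- sigma) * cmod v1))].
Proof.
move=> _ a_gt0 b_gt0 _ _.
have ainv_gt0 : 0 < a^-1 by rewrite invr_gt0.
have binv_gt0 : 0 < b^-1 by rewrite invr_gt0.
pose K := 1 + a^-1 + b^-1.
have K_ge1 : 1 <= K by rewrite /K; lra.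
have Ka_ge1 : 1 <= K * a.
  by rewrite /K !mulrDl mulVf ?gt_eqF //; have := mulr_gt0 a_gt0 binv_gt0; lra.
have Kb_ge1 : 1 <= K * b.
  by rewrite /K !mulrDl [b^-1 * b]mulVf ?gt_eqF //; have := mulr_gt0 ainv_gt0 b_gt0; lra.
exists (1 + a^-1), 2^-1, (2 * K); split; [lra | by rewrite invr_gt0 | lra |].
move=> t xi v0 v1 _ N0_le.
have [m [sqrt_eq m2_ge1 a_le b_le]] :=
  @sqrt_disc_high_freq R n a b sigma xi a_gt0 b_gt0 N0_le.
have r_gt0 : 0 < eucl_norm xi by lra.
split=> _; last rewrite powRN.
- apply: (cmod_vhat_oscillatory_decay v0 v1 t sqrt_eq m2_ge1 _ K_ge1 Ka_ge1 a_le).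
  by rewrite invr_ge0 ltW.
- apply: (cmod_vhat_oscillatory_decay v0 v1 t sqrt_eq m2_ge1 _ K_ge1 Kb_ge1 b_le).
  by rewrite invr_ge0 powR_ge0.
Qed.
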